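(* Let $V:\mathbb R^3\to\mathbb R$ be in $L^\infty_{loc}(\mathbb R^3)$ with $\operatorname{ess\,inf}V>0$, let $\varepsilon>0$, and assume $W_\varepsilon$ embeds compactly into $L^p(\mathbb R^3)$ for every $p\in(2,6)$. Let $f:\mathbb R\to\mathbb R$ be continuous, satisfying either ($f(u)\ge0$ for $u\ge0$ and $f(u)=0$ for $u\le0$) or ($f$ odd and $f(u)\ge0$ for $u\ge0$), and such that there is $q\in(2,6)$ with $\lim_{u\to\infty}f(u)/u^{q-1}=0$ and $\lim_{u\to0}f(u)/u=0$. Then $$\mathfrak m_\varepsilon:=\inf_{u\in\mathcal M_\varepsilon}I_\varepsilon(u)>0.$$
   Context: $F(t)=\int_0^tf(s)\,ds$. $W_\varepsilon:=\{u\in H^1(\mathbb R^3):\int_{\mathbb R^3}V(\varepsilon x)u^2<\infty\}$ with norm $\|u\|_{W_\varepsilon}^2=\int|\nabla u|^2+\int V(\varepsilon x)u^2$. For $u\in H^1(\mathbb R^3)$, $\phi_u(x)=\int_{\mathbb R^3}\frac{1-e^{-|x-y|}}{|x-y|}u^2(y)\,dy$; $\mathcal M_\varepsilon=\{u\in W_\varepsilon:\int\phi_uu^2=1\}$ and $I_\varepsilon(u)=\frac12\|u\|_{W_\varepsilon}^2+\int_{\mathbb R^3}F(u)$. *)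

From HB Require Import structures.
From mathcomp Require Import all_boot all_order all_algebra.
From mathcomp Require Import all_classical all_reals all_analysis.
Set Implicit Arguments. Unset Strict Implicit. Unset Printing Implicit Defensive.
Import Order.TTheory GRing.Theory Num.Theory.
Import numFieldNormedType.Exports.
Local Open Scope classical_set_scope.
Local Open Scope ring_scope.

Section Defs.
Variable R : realType.

Definition pt := (measurableTypeR R * measurableTypeR R * measurableTypeR R)%type.

Definition mu3 := ((@lebesgue_measure R \x @lebesgue_measure R) \x @lebesgue_measure R)%E.

Definition c1 (x : pt) : R := x.1.1.
Definition c2 (x : pt) : R := x.1.2.
Definition c3 (x : pt) : R := x.2.
Definition mkpt (a b c : R) : pt := ((a, b), c).

Definition enorm (x : pt) : R := Num.sqrt (c1 x ^+ 2 + c2 x ^+ 2 + c3 x ^+ 2).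
Definition edist (x y : pt) : R :=
  enorm (mkpt (c1 x - c1 y) (c2 x - c2 y) (c3 x - c3 y)).
Definition scalept (e : R) (x : pt) : pt := mkpt (e * c1 x) (e * c2 x) (e * c3 x).

Definition shift (i : 'I_3) (x : pt) (t : R) : pt :=
  mkpt (c1 x + (if val i == 0%N then t else 0))
       (c2 x + (if val i == 1%N then t else 0))
       (c3 x + (if val i == 2%N then t else 0)).

Definition partial (i : 'I_3) (phi : pt -> R) : pt -> R :=
  fun x => derive1 (fun t => phi (shift i x t)) 0.

Definition iter_partial (s : seq 'I_3) (phi : pt -> R) : pt -> R :=
  foldr partial phi s.

Definition contR3 (g : pt -> R) : Prop :=
  continuous (fun p : R * R * R => g (mkpt p.1.1 p.1.2 p.2)).

Definition test_fun (phi : pt -> R) : Prop :=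
  (forall s : seq 'I_3, contR3 (iter_partial s phi) /\
     forall (i : 'I_3) (x : pt), derivable (fun t => iter_partial s phi (shift i x t)) 0 1)
  /\ exists M : R, forall x : pt, M < enorm x -> phi x = 0.

Local Open Scope ereal_scope.

Definition L2fun (u : pt -> R) : Prop :=
  measurable_fun setT u /\ \int[mu3]_x ((u x) ^+ 2)%:E < +oo.

Definition H1_grad (u : pt -> R) (g : 'I_3 -> pt -> R) : Prop :=
  L2fun u /\ (forall i, L2fun (g i)) /\
  forall phi, test_fun phi -> forall i : 'I_3,
    \int[mu3]_x ((u x * partial i phi x)%R)%:E =
    - \int[mu3]_x ((g i x * phi x)%R)%:E.

Definition Vpart (V : pt -> R) (eps : R) (u : pt -> R) : \bar R :=
  \int[mu3]_x ((V (scalept eps x) * (u x) ^+ 2)%R)%:E.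

Definition Wnorm2 (V : pt -> R) (eps : R) (u : pt -> R) (g : 'I_3 -> pt -> R) : \bar R :=
  (\sum_(i < 3) \int[mu3]_x ((g i x) ^+ 2)%:E) + Vpart V eps u.

Definition in_W (V : pt -> R) (eps : R) (u : pt -> R) (g : 'I_3 -> pt -> R) : Prop :=
  H1_grad u g /\ Vpart V eps u < +oo.

Definition Lp_dist (p : R) (u v : pt -> R) : \bar R :=
  \int[mu3]_x ((`|u x - v x| `^ p)%R)%:E.

Definition compact_embed (V : pt -> R) (eps p : R) : Prop :=
  (forall u g, in_W V eps u g -> \int[mu3]_x ((`|u x| `^ p)%R)%:E < +oo) /\
  forall (u : nat -> pt -> R) (g : nat -> 'I_3 -> pt -> R) (C : R),
    (forall n, in_W V eps (u n) (g n)) ->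
    (forall n, Wnorm2 V eps (u n) (g n) <= C%:E) ->
    exists (sub : nat -> nat) (v : pt -> R),
      (forall n m, (n < m)%N -> (sub n < sub m)%N) /\
      measurable_fun setT v /\ \int[mu3]_x ((`|v x| `^ p)%R)%:E < +oo /\
      (fun n => Lp_dist p (u (sub n)) v) @ \oo --> 0.

Definition phiu (u : pt -> R) (x : pt) : \bar R :=
  \int[mu3]_y (((1 - expR (- edist x y)) / edist x y * (u y) ^+ 2)%R)%:E.

Definition coulomb (u : pt -> R) : \bar R :=
  \int[mu3]_x (phiu u x * ((u x) ^+ 2)%:E).

Definition primF (f : R -> R) (t : R) : R :=
  if (0 <= t)%R then (\int[@lebesgue_measure R]_(s in `[0%R, t]) f s)%R
  else (- \int[@lebesgue_measure R]_(s in `[t, 0%R]) f s)%R.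

Definition Ieps (V : pt -> R) (eps : R) (f : R -> R) (u : pt -> R) (g : 'I_3 -> pt -> R) : \bar R :=
  (2^-1)%:E * Wnorm2 V eps u g + \int[mu3]_x (primF f (u x))%:E.

Definition m_eps (V : pt -> R) (eps : R) (f : R -> R) : \bar R :=
  ereal_inf [set Ieps V eps f ug.1 ug.2 | ug in
     [set ug : (pt -> R) * ('I_3 -> pt -> R) |
        in_W V eps ug.1 ug.2 /\ coulomb ug.1 = 1]].

End Defs.

From Pilot Require Import Defs.
From HB Require Import structures.
From mathcomp Require Import all_boot all_order all_algebra.
From mathcomp Require Import all_classical all_reals all_analysis.
From mathcomp Require Import measurable_realfun lra.
Import Order.TTheory GRing.Theory Num.Theory.
Import numFieldNormedType.Exports.
Local Open Scope classical_set_scope.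
Local Open Scope ring_scope.

(** On the constraint set, [1 = ∫ φ_u u² ≤ (∫ u²)²] because the kernel
   [(1 - e^{-r})/r] lies in [[0, 1]], so [‖u‖₂ ≥ 1].  Since [V ≥ c > 0] a.e.
   and dilations preserve null sets, [‖u‖²_{W_ε} ≥ ∫ V(εx) u² ≥ c ‖u‖₂² ≥ c],
   while the sign conditions on [f] make [F ≥ 0]; hence [I_ε(u) ≥ c/2] on
   [M_ε]. *)

Section integral_monotonicity.
Local Open Scope ereal_scope.

(* Unlike [ge0_le_integral], no measurability is required: [phiu u] is not
   known to be measurable. *)
Lemma ge0_le_integral_nonmeasurable d (T : measurableType d) (R : realType)
    (mu : {measure set T -> \bar R}) (f1 f2 : T -> \bar R) :
  (forall x, 0 <= f1 x) -> (forall x, f1 x <= f2 x) ->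
  \int[mu]_x f1 x <= \int[mu]_x f2 x.
Proof.
move=> f1_ge0 f12.
have f2_ge0 x : 0 <= f2 x by exact: le_trans (f1_ge0 x) (f12 x).
rewrite !ge0_integralE //.
apply: ge_ereal_sup => _ [h hf1 <-]; apply: ereal_sup_ubound; exists h => //= x.
by apply: le_trans (hf1 x) _; rewrite /patch; case: ifP => // _; exact: f12.
Qed.

End integral_monotonicity.

Section scaling.
Local Open Scope ereal_scope.

Lemma ge0_integral_comp_scaling {d} {T : measurableType d} {R : realType}
    {m : {measure set T -> \bar R}} {s : T -> T} {k : {nonneg R}} :
  measurable_fun setT s ->
  (forall A, measurable A -> m (s @^-1` A) = k%:num%:E * m A) ->
  forall phi : T -> \bar R, measurable_fun setT phi -> (forall x, 0 <= phi x) ->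
  \int[m]_x phi (s x) = k%:num%:E * \int[m]_x phi x.
Proof.
move=> ms ms_scale phi mphi phi_ge0.
have := @ge0_integral_pushforward _ _ T T R s ms m setT phi measurableT mphi
  (fun y _ => phi_ge0 y).
rewrite preimage_setT => <-.
rewrite -ge0_integral_mscale //.
apply: (@eq_measure_integral _ _ _ setT (mscale k m) (pushforward m s)) => A mA _.
by change (m (s @^-1` A) = k%:num%:E * m A); exact: ms_scale.
Qed.

Lemma product_measure1_preimage_scaling {d1 d2} {T1 : measurableType d1}
    {T2 : measurableType d2} {R : realType} {m1 : {measure set T1 -> \bar R}}
    {m2 : {sigma_finite_measure set T2 -> \bar R}}
    {s1 : T1 -> T1} {s2 : T2 -> T2} {k1 k2 : {nonneg R}} :
  measurable_fun setT s1 -> measurable_fun setT s2 ->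
  (forall A, measurable A -> m1 (s1 @^-1` A) = k1%:num%:E * m1 A) ->
  (forall A, measurable A -> m2 (s2 @^-1` A) = k2%:num%:E * m2 A) ->
  forall A, measurable A ->
    (m1 \x m2) ((fun p => (s1 p.1, s2 p.2)) @^-1` A) =
    (k1%:num * k2%:num)%:E * (m1 \x m2) A.
Proof.
move=> ms1 ms2 s1_scale s2_scale A mA; rewrite /product_measure1.
transitivity (\int[m1]_x (k2%:num%:E * (m2 \o xsection A) (s1 x))).
  apply: eq_integral => x _ /=; rewrite -s2_scale; last exact: measurable_xsection.
  by congr (m2 _); apply/seteqP; split => y /=; rewrite /xsection /preimage /= !inE.
have mA2 : measurable_fun setT (m2 \o xsection A) by exact: measurable_fun_xsection.
rewrite ge0_integralZl_EFin //; last exact: measurableT_comp mA2 ms1.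
by rewrite (ge0_integral_comp_scaling ms1 s1_scale) // muleA -EFinM mulrC.
Qed.

End scaling.

(* [B |-> e * leb (e^-1 B)] is a measure agreeing with [leb] on intervals. *)
Lemma lebesgue_measure_preimage_mulr {R : realType} (e : R) (A : set R) :
  0 < e -> measurable A ->
  lebesgue_measure ((fun x => e * x) @^-1` A) = ((e^-1)%:E * lebesgue_measure A)%E.
Proof.
move=> e_gt0 mA.
have me : measurable_fun (setT : set (measurableTypeR R))
    (fun x : measurableTypeR R => e * x : measurableTypeR R).
  exact: mulrl_measurable.
pose k : {nonneg R} := NngNum (ltW e_gt0).
pose scaled_pushforward := mscale k
  (measure_function_pushforward__canonical__measure_function_Measure
     (@lebesgue_measure R) me).
have scaledE B : scaled_pushforward B =
    (e%:E * lebesgue_measure ((fun x => (e * x)%R) @^-1` B))%E by [].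
rewrite -[LHS]mul1e -(mulVf (lt0r_neq0 e_gt0)) EFinM -muleA -scaledE.
congr (_ * _)%E; apply/esym/lebesgue_measure_unique => // _ [[a b] _ <-] /=.
change (lebesgue_measure `]a, b]%classic = scaled_pushforward `]a, b]%classic).
rewrite scaledE.
have -> : (fun x => e * x) @^-1` `]a, b]%classic = `]a / e, b / e]%classic.
  apply/seteqP; split => x /=;
    by rewrite !in_itv /= ltr_pdivrMr // ler_pdivlMr // (mulrC x e).
rewrite !lebesgue_measure_itv /= !lte_fin ltr_pM2r ?invr_gt0 //.
case: ifP => _; last by rewrite mule0.
by rewrite -EFinM mulrBr !(mulrC e) !divfK ?gt_eqF.
Qed.

Section scalept.
Context {R : realType} (eps : R).
Hypothesis eps_gt0 : 0 < eps.

Let mulr_eps_measurable : measurable_fun setT (fun x : measurableTypeR R => eps * x).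
Proof. exact: mulrl_measurable. Qed.

Lemma measurable_scalept : measurable_fun setT (scalept eps : pt R -> pt R).
Proof.
apply: measurable_fun_pair; first apply: measurable_fun_pair.
- exact: measurableT_comp mulr_eps_measurable
    (measurableT_comp measurable_fst measurable_fst).
- exact: measurableT_comp mulr_eps_measurable
    (measurableT_comp measurable_snd measurable_fst).
- exact: measurableT_comp mulr_eps_measurable measurable_snd.
Qed.

Lemma mu3_preimage_scalept (A : set (pt R)) : measurable A ->
  @mu3 R (scalept eps @^-1` A) = ((eps ^-1 ^+ 3)%:E * @mu3 R A)%E.
Proof.
have inv_ge0 : 0 <= eps^-1 by rewrite invr_ge0 ltW.
pose k : {nonneg R} := NngNum inv_ge0.
have leb_scale B : measurable B -> lebesgue_measure ((fun x => eps * x) @^-1` B) =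
    (k%:num%:E * lebesgue_measure B)%E.
  exact: lebesgue_measure_preimage_mulr.
have mulr_eps2_measurable : measurable_fun setT
    (fun p : measurableTypeR R * measurableTypeR R => (eps * p.1, eps * p.2)).
  apply: measurable_fun_pair.
  - exact: measurableT_comp mulr_eps_measurable measurable_fst.
  - exact: measurableT_comp mulr_eps_measurable measurable_snd.
have leb2_scale := product_measure1_preimage_scaling
  mulr_eps_measurable mulr_eps_measurable leb_scale leb_scale.
pose kk : {nonneg R} := NngNum (mulr_ge0 inv_ge0 inv_ge0).
have := product_measure1_preimage_scaling (k1 := kk)
  mulr_eps2_measurable mulr_eps_measurable leb2_scale leb_scale.
by move=> scale3 mA; rewrite [LHS]scale3 // !exprS expr0 mulr1 mulrA.
Qed.

End scalept.

Lemma bopp_podolsky_kernel_ge0_le1 {R : realType} (r : R) :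
  0 <= r -> 0 <= (1 - expR (- r)) / r <= 1.
Proof.
rewrite le_eqVlt => /orP[/eqP <-|r_gt0]; first by rewrite invr0 mulr0 lexx ler01.
have expNr_le1 : expR (- r) <= 1 by rewrite expR_le1 oppr_le0 ltW.
have expNr_ge := expR_ge1Dx (- r).
apply/andP; split; first by rewrite divr_ge0 ?subr_ge0 // ltW.
by rewrite ler_pdivrMr // mul1r; lra.
Qed.

Section coulomb_energy.
Local Open Scope ereal_scope.
Context {R : realType} {u : pt R -> R}.
Hypothesis mu : measurable_fun setT u.

Local Notation L2 := (\int[@mu3 R]_x ((u x) ^+ 2)%:E).

Let kernel_bounds x y :=
  @bopp_podolsky_kernel_ge0_le1 R (Defs.edist x y) (sqrtr_ge0 _).

Lemma phiu_ge0 x : 0 <= phiu u x.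
Proof.
apply: integral_ge0 => y _; rewrite lee_fin mulr_ge0 ?sqr_ge0 //.
by case/andP: (kernel_bounds x y).
Qed.

Lemma phiu_le_L2 x : phiu u x <= L2.
Proof.
apply: ge0_le_integral_nonmeasurable => y;
  have /andP[kernel_ge0 kernel_le1] := kernel_bounds x y; rewrite lee_fin.
  by rewrite mulr_ge0 ?sqr_ge0.
by rewrite ler_piMl ?sqr_ge0.
Qed.

Lemma coulomb_le_L2_sqr : coulomb u <= L2 * L2.
Proof.
have sqr_ge0E x : 0 <= ((u x) ^+ 2)%:E by rewrite lee_fin sqr_ge0.
have msqr : measurable_fun setT (fun x => ((u x) ^+ 2)%:E).
  by apply/measurable_EFinP; exact: measurable_funX.
rewrite -ge0_integralZl //; last exact: integral_ge0.
apply: ge0_le_integral_nonmeasurable => x.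
  by rewrite mule_ge0 ?phiu_ge0.
by rewrite lee_wpmul2r ?phiu_le_L2.
Qed.

Lemma L2_ge1_of_coulomb_eq1 : coulomb u = 1 -> 1 <= L2.
Proof.
move=> coulomb1; have := coulomb_le_L2_sqr; rewrite coulomb1.
have : 0 <= L2 by apply: integral_ge0 => x _; rewrite lee_fin sqr_ge0.
by case: L2 => // a; rewrite -EFinM !lee_fin; nra.
Qed.

End coulomb_energy.

Lemma ae_comp_scalept {R : realType} {eps : R} {P : pt R -> Prop} :
  0 < eps -> {ae @mu3 R, forall x, P x} ->
  {ae @mu3 R, forall x, P (scalept eps x)}.
Proof.
move=> eps_gt0 [N [mN N0 notP_N]]; exists (scalept eps @^-1` N); split.
- by rewrite -[X in measurable X]setTI; exact: measurable_scalept.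
- by rewrite mu3_preimage_scalept // N0 mule0.
- by move=> x /= notPx; exact: notP_N.
Qed.

Lemma Vpart_ge_L2 {R : realType} {V : pt R -> R} {eps c : R} {u : pt R -> R} :
  measurable_fun setT V -> 0 < eps -> 0 <= c -> {ae @mu3 R, forall x, c <= V x} ->
  measurable_fun setT u ->
  (c%:E * \int[@mu3 R]_x ((u x) ^+ 2)%:E <= Vpart V eps u)%E.
Proof.
move=> mV eps_gt0 c_ge0 V_ge_c mu.
have msqr : measurable_fun setT (fun x => u x ^+ 2) by exact: measurable_funX.
have sqr_ge0E x : setT x -> (0 <= (u x ^+ 2)%:E)%E by rewrite lee_fin sqr_ge0.
have mVs := measurableT_comp mV (measurable_scalept eps).
rewrite /Vpart [leRHS](ae_eq_integral
  (fun x => (Num.max (V (scalept eps x)) c * u x ^+ 2)%:E)) //.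
- rewrite -ge0_integralZl_EFin //; last exact/measurable_EFinP.
  apply: ge0_le_integral_nonmeasurable => x; rewrite -EFinM lee_fin.
    by rewrite mulr_ge0 ?sqr_ge0.
  by rewrite ler_wpM2r ?sqr_ge0 // le_max lexx orbT.
- by apply/measurable_EFinP; exact: measurable_funM.
- by apply/measurable_EFinP; apply: measurable_funM => //; exact: measurable_maxr.
- apply: filterS (ae_comp_scalept eps_gt0 V_ge_c) => x c_le_Vx _.
  by rewrite max_l.
Qed.

Lemma Vpart_le_Wnorm2 {R : realType} (V : pt R -> R) (eps : R) (u : pt R -> R)
    (g : 'I_3 -> pt R -> R) :
  (Vpart V eps u <= Wnorm2 V eps u g)%E.
Proof.
apply: lee_paddl => //; apply: sume_ge0 => i _.
by apply: integral_ge0 => x _; rewrite lee_fin sqr_ge0.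
Qed.

Lemma primF_ge0 {R : realType} (f : R -> R) (t : R) :
  (forall s, 0 <= s -> 0 <= f s) -> (forall s, s <= 0 -> f s <= 0) ->
  0 <= primF f t.
Proof.
move=> f_ge0 f_le0; rewrite /primF; case: ifPn => t_ge0.
  apply/fine_ge0/integral_ge0 => s /=; rewrite in_itv /= => /andP[s_ge0 _].
  by rewrite lee_fin f_ge0.
rewrite oppr_ge0; apply: fine_le0.
rewrite (eq_integral (fun s : measurableTypeR R => - (- f s)%:E)%E); last first.
  by move=> s _; rewrite EFinN oppeK.
rewrite integral_ge0N; last first.
  by move=> s /=; rewrite in_itv /= lee_fin oppr_ge0 => /andP[_ /f_le0].
rewrite oppe_le0; apply: integral_ge0 => s /=; rewrite in_itv /= => /andP[_ s_le0].
by rewrite lee_fin oppr_ge0 f_le0.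
Qed.

Lemma Ieps_ge_half_Wnorm2 {R : realType} (V : pt R -> R) (eps : R) (f : R -> R)
    (u : pt R -> R) (g : 'I_3 -> pt R -> R) :
  (forall s, 0 <= s -> 0 <= f s) -> (forall s, s <= 0 -> f s <= 0) ->
  ((2^-1)%:E * Wnorm2 V eps u g <= Ieps V eps f u g)%E.
Proof.
move=> f_ge0 f_le0; apply: lee_paddr => //.
by apply: integral_ge0 => x _; rewrite lee_fin primF_ge0.
Qed.

Theorem lemma2p7 (R : realType) (V : pt R -> R) (eps : R) (f : R -> R) (q : R) :
  measurable_fun setT V ->
  (forall r : R, exists C : R, {ae @mu3 R, forall x, enorm x <= r -> `|V x| <= C}) ->
  (exists c : R, 0 < c /\ {ae @mu3 R, forall x, c <= V x}) ->
  0 < eps ->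
  (forall p : R, 2 < p < 6 -> compact_embed V eps p) ->
  continuous f ->
  ((forall u, 0 <= u -> 0 <= f u) /\ (forall u, u <= 0 -> f u = 0)
   \/ (forall u, f (- u) = - f u) /\ (forall u, 0 <= u -> 0 <= f u)) ->
  2 < q < 6 ->
  f u / u `^ (q - 1) @[u --> +oo] --> 0 ->
  f u / u @[u --> 0^'] --> 0 ->
  (0 < m_eps V eps f)%E.
Proof.
move=> mV _ [c [c_gt0 V_ge_c]] eps_gt0 _ _ f_sign _ _ _.
have [f_ge0 f_le0] : (forall s, 0 <= s -> 0 <= f s) /\ (forall s, s <= 0 -> f s <= 0).
  case: f_sign => [[f_ge0 f_eq0]|[f_odd f_ge0]]; split => // s s_le0.
    by rewrite f_eq0.
  by rewrite -[s]opprK f_odd oppr_le0 f_ge0 // oppr_ge0.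
apply: (@lt_le_trans _ _ (2^-1 * c)%:E); first by rewrite lte_fin mulr_gt0 ?invr_gt0.
apply: le_ereal_inf_tmp => _ [[u g] /= [[[[mu _] _] _] coulomb1] <-].
apply: le_trans _ (Ieps_ge_half_Wnorm2 V eps f u g f_ge0 f_le0).
rewrite EFinM lee_pmul2l ?lte_fin ?invr_gt0 //.
apply: le_trans _ (Vpart_le_Wnorm2 V eps u g).
apply: le_trans _ (Vpart_ge_L2 mV eps_gt0 (ltW c_gt0) V_ge_c mu).
rewrite -[leLHS]mule1 lee_pmul2l ?lte_fin //.
exact: L2_ge1_of_coulomb_eq1 mu coulomb1.
Qed.
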